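(* Over a field of characteristic $0$: the identity $[x_1,x_3\circ x_2]\circ x_4+([x_3,x_1]\circ x_2)\circ x_4=[x_1,(x_3\circ x_4)\circ x_2]+[x_3\circ x_4,x_1]\circ x_2$ ( * ) holds in every differential Poisson algebra $(V,\cdot,\{\cdot,\cdot\},d)$ with respect to $[u,v]=\{u,v\}$ and $u\circ v=u\,d(v)$ (hence on all special GD-algebras), but there exists a GD-algebra on which ( * ) does not hold.
   Context: A differential Poisson algebra is a Poisson algebra (associative commutative product, Lie bracket $\{\cdot,\cdot\}$, Leibniz rule $\{x,yz\}=\{x,y\}z+y\{x,z\}$) with a linear map $d$ which is a derivation of both operations. A GD-algebra is a system $(A,\circ,[\cdot,\cdot])$ such that $(a\circ b)\circ c-a\circ(b\circ c)=(b\circ a)\circ c-b\circ(a\circ c)$, $(a\circ b)\circ c=(a\circ c)\circ b$, $(A,[\cdot,\cdot])$ is a Lie algebra, and $[a,b\circ c]-[c,b\circ a]+[b,a]\circ c-[b,c]\circ a-b\circ[a,c]=0$. *)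

From HB Require Import structures.
From mathcomp Require Import all_boot all_order all_algebra.
Set Implicit Arguments. Unset Strict Implicit. Unset Printing Implicit Defensive.
Import GRing.Theory.
Local Open Scope ring_scope.

Section Defs.
Variables (K : fieldType) (V : lmodType K).

Definition is_linear_map (d : V -> V) : Prop :=
  forall (a : K) (x y : V), d (a *: x + y) = a *: d x + d y.

Definition is_bilinear (f : V -> V -> V) : Prop :=
  forall (a : K) (x y z : V),
    f (a *: x + y) z = a *: f x z + f y z /\
    f z (a *: x + y) = a *: f z x + f z y.

Definition is_lie_bracket (br : V -> V -> V) : Prop :=
  [/\ is_bilinear br,
      (forall x, br x x = 0) &
      (forall x y z, br x (br y z) + br y (br z x) + br z (br x y) = 0)].

Definition is_diff_poisson (mul br : V -> V -> V) (d : V -> V) : Prop :=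
  is_bilinear mul /\
  (forall x y z, mul (mul x y) z = mul x (mul y z)) /\
  (forall x y, mul x y = mul y x) /\
  is_lie_bracket br /\
  (forall x y z, br x (mul y z) = mul (br x y) z + mul y (br x z)) /\
  is_linear_map d /\
  (forall x y, d (mul x y) = mul (d x) y + mul x (d y)) /\
  (forall x y, d (br x y) = br (d x) y + br x (d y)).

Definition is_GD (circ br : V -> V -> V) : Prop :=
  [/\ is_bilinear circ,
      (forall a b c, circ (circ a b) c - circ a (circ b c)
                     = circ (circ b a) c - circ b (circ a c)),
      (forall a b c, circ (circ a b) c = circ (circ a c) b),
      is_lie_bracket br &
      (forall a b c, br a (circ b c) - br c (circ b a) + circ (br b a) c
                     - circ (br b c) a - circ b (br a c) = 0)].

Definition identity_star (circ br : V -> V -> V) : Prop :=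
  forall x1 x2 x3 x4 : V,
    circ (br x1 (circ x3 x2)) x4 + circ (circ (br x3 x1) x2) x4
    = br x1 (circ (circ x3 x4) x2) + circ (br (circ x3 x4) x1) x2.

End Defs.

From HB Require Import structures.
From mathcomp Require Import all_boot all_order all_algebra.
From mathcomp Require Import ring.
Set Implicit Arguments. Unset Strict Implicit. Unset Printing Implicit Defensive.
Import GRing.Theory.
Local Open Scope ring_scope.

(* Positive part.  Write D2 = d x2 and D4 = d x4.  In any commutative
   associative algebra with an antisymmetric bracket satisfying the Leibniz
   rule one has the "transfer" identity
        {a, b c} + {b, a} c = b {a, c}.
   With a = x1, b = x3, c = D2 the left side of ( * ) is (x3 {x1, D2}) D4;
   with b = x3 D4 the right side is (x3 D4) {x1, D2}.  These agree by
   associativity and commutativity.  Neither the derivation d nor the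
   characteristic assumption plays a role.

   Negative part.  On K^3 with basis e0, e1, e2 put
        u o v = v0 (u0 e0 + u1 e1),     [u, v] = (u0 v2 - u2 v0) e1.
   All GD axioms are coordinatewise polynomial identities, checked by [ring];
   for x1 = x2 = x4 = e0 and x3 = e2 the left side of ( * ) is -e1 and the
   right side is 0. *)

Section Bilinear.
Variables (K : fieldType) (V : lmodType K) (f : V -> V -> V).
Hypothesis f_bilinear : is_bilinear f.

Lemma bilinearDl x y z : f (x + y) z = f x z + f y z.
Proof. by have := (f_bilinear 1 x y z).1; rewrite !scale1r. Qed.

Lemma bilinearDr x y z : f z (x + y) = f z x + f z y.
Proof. by have := (f_bilinear 1 x y z).2; rewrite !scale1r. Qed.

Lemma bilinearNl x z : f (- x) z = - f x z.
Proof.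
have f0z : f 0 z = 0.
  by apply: (addrI (f 0 z)); rewrite -bilinearDl !addr0.
by have := (f_bilinear (-1) x 0 z).1; rewrite addr0 f0z addr0 !scaleN1r.
Qed.
End Bilinear.

Lemma lie_antisym (K : fieldType) (V : lmodType K) (br : V -> V -> V) :
  is_lie_bracket br -> forall x y, br y x = - br x y.
Proof.
case=> br_bilinear br_alt _ x y; apply/eqP; rewrite -addr_eq0 addrC; apply/eqP.
have := br_alt (x + y).
by rewrite !(bilinearDl br_bilinear) !(bilinearDr br_bilinear) !br_alt add0r addr0.
Qed.

Lemma poisson_transfer (K : fieldType) (V : lmodType K) (mul br : V -> V -> V) :
  is_bilinear mul -> is_lie_bracket br ->
  (forall x y z, br x (mul y z) = mul (br x y) z + mul y (br x z)) ->
  forall a b c, br a (mul b c) + mul (br b a) c = mul b (br a c).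
Proof.
move=> mul_bilinear br_lie leibniz a b c.
by rewrite leibniz (lie_antisym br_lie a b) (bilinearNl mul_bilinear) addrAC subrr add0r.
Qed.

Lemma diff_poisson_identity_star (K : fieldType) (V : lmodType K)
    (mul br : V -> V -> V) (d : V -> V) :
  is_diff_poisson mul br d -> identity_star (fun u v => mul u (d v)) br.
Proof.
move=> [mul_bilinear [mulA [mulC [br_lie [leibniz _]]]]] x1 x2 x3 x4 /=.
have transfer := poisson_transfer mul_bilinear br_lie leibniz.
rewrite -(bilinearDl mul_bilinear) !transfer.
by rewrite !mulA (mulC (d x4)).
Qed.

Section Counterexample.
Variable K : fieldType.
Local Notation V := 'rV[K]_3.

Definition circ_ex (u v : V) : V :=
  \row_i (v 0 0 * (if i == 0 then u 0 0 else if i == 1 then u 0 1 else 0)).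

Definition br_ex (u v : V) : V :=
  \row_i (if i == 1 then u 0 0 * v 0 2 - u 0 2 * v 0 0 else 0).

Ltac coordinatewise :=
  apply/rowP; case=> [[|[|[|?]]] ?]; rewrite !mxE /= ?mxE /=; ring.

Lemma circ_ex_bilinear : is_bilinear circ_ex.
Proof. by move=> a x y z; split; coordinatewise. Qed.

Lemma br_ex_lie : is_lie_bracket br_ex.
Proof. by split=> [a x y z|x|x y z]; [split|..]; coordinatewise. Qed.

Lemma GD_example : is_GD circ_ex br_ex.
Proof.
split; [exact: circ_ex_bilinear | | | exact: br_ex_lie |].
- by move=> a b c; coordinatewise.
- by move=> a b c; coordinatewise.
- by move=> a b c; coordinatewise.
Qed.

(* The e1-coordinates of the two sides of ( * ) at (e0, e0, e2, e0) are -1 and 0. *)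
Lemma GD_example_not_star : ~ identity_star circ_ex br_ex.
Proof.
pose e (k : 'I_3) : V := delta_mx 0 k.
move=> /(_ (e 0) (e 0) (e 2) (e 0)) /(congr1 (fun v : V => v 0 1)).
rewrite /circ_ex /br_ex /e !mxE /= !(mul0r, mulr0, mul1r, mulr1, subr0, sub0r, add0r, addr0).
by move/eqP; rewrite oppr_eq0 oner_eq0.
Qed.
End Counterexample.

Theorem mainTheorem19 (K : fieldType) (hK : [pchar K] =i pred0) :
  (forall (V : lmodType K) (mul br : V -> V -> V) (d : V -> V),
      is_diff_poisson mul br d ->
      identity_star (fun u v => mul u (d v)) br) /\
  (exists (V : lmodType K) (circ br : V -> V -> V),
      is_GD circ br /\ ~ identity_star circ br).
Proof.
split; first exact: diff_poisson_identity_star.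
exists 'rV[K]_3, (@circ_ex K), (@br_ex K).
split; [exact: GD_example | exact: GD_example_not_star].
Qed.
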